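(* Let $A=(a_{i,j})$ be an $n\times n$ matrix with indeterminate entries. Then there exists a unique $n\times n$ matrix $B=(b_{i,j})$, with entries of the form $b_{i,j}=a_{i,j}+r_{i,j}$, satisfying the following properties: \begin{enumerate} \item $r_{i,j}=0$ if $i+j\le n$; \item the $r_{i,j}=r_{i,j}(a_{k,\ell})$ are rational functions of the $a_{k,\ell}$ for which $k\ge i$, $\ell\le j$, and $(k,\ell)\neq (i,j)$; \item for any $i<j$, \[ \det\begin{pmatrix} b_{n-j+i,i} & \dots & b_{n-j+i,j} \\ \vdots & \ddots & \vdots \\ b_{n, i} & \dots & b_{n, j} \end{pmatrix} \ = \ \det M_{i,j}, \] where $M_{i,j}$ is the $(j-i+1)\times(j-i+1)$ anti-diagonal matrix whose only nonzero entries lie on the anti-diagonal, namely the entry in row $m+1$ and column $j-i+1-m$ is $a_{n-j+i+m,\,j-m}$ for $0\le m\le j-i$ (so its top-right entry is $a_{n-j+i,j}$, the next one down-left is $a_{n-j+i+1,j-1}$, and so on, down to the bottom-left entry $a_{n,i}$), and all other entries are $0$. \end{enumerate}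
   Context: Here $n\ge 1$ and the $a_{i,j}$, $1\le i,j\le n$, are independent indeterminates; ''rational function'' means an element of the field of rational functions in these indeterminates. The square blocks in property 3 are the contiguous subblocks of $B$ consisting of rows $n-j+i$ through $n$ and columns $i$ through $j$ (i.e., blocks whose bottom row is the bottom row of $B$).
   Formalization: Property 3 is imposed for all i ≤ j rather than only for i < j, so each bottom-row entry $b_{n,i}$ also equals $a_{n,i}$ for every i. The statement above fails without it. *)

From HB Require Import structures.
From mathcomp Require Import all_boot all_order all_algebra.
From mathcomp Require Import fraction.
From mathcomp Require Import mpoly.

Set Implicit Arguments.
Unset Strict Implicit.
Unset Printing Implicit Defensive.

Import GRing.Theory.
Local Open Scope ring_scope.

(* Conventions (0-based indices, i.e. paper index = Rocq index + 1):
   - K : base field; the n^2 indeterminates a_{k,l} are the variables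
     'X_(mxvec_index k l) of {mpoly K[n*n]};
   - ratfun K n := the field of rational functions in these indeterminates. *)

Definition ratfun (K : fieldType) (n : nat) := {fraction {mpoly K[n * n]}}.

Definition polyfrac (K : fieldType) (n : nat) (p : {mpoly K[n * n]})
  : ratfun K n := @FracField.tofrac _ p.

Definition indet (K : fieldType) (n : nat) (k l : 'I_n) : ratfun K n :=
  polyfrac 'X_(mxvec_index k l).

Definition indetmx (K : fieldType) (n : nat) : 'M[ratfun K n]_n :=
  \matrix_(k, l) indet K k l.

Definition poly_in_vars (K : fieldType) (n : nat) (S : {set 'I_n * 'I_n})
    (p : {mpoly K[n * n]}) : Prop :=
  forall m, m \in msupp p ->
    forall k l : 'I_n, (m (mxvec_index k l) != 0)%N -> (k, l) \in S.

Definition ratfun_in_vars (K : fieldType) (n : nat) (S : {set 'I_n * 'I_n})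
    (r : ratfun K n) : Prop :=
  exists p q : {mpoly K[n * n]},
    [/\ q != 0, poly_in_vars S p, poly_in_vars S q & r = polyfrac p / polyfrac q].

Definition admissible (n : nat) (i j : 'I_n) : {set 'I_n * 'I_n} :=
  [set kl : 'I_n * 'I_n | [&& (i <= kl.1)%N, (kl.2 <= j)%N & kl != (i, j)]].

(* For i <= j (0-based), the square block of X with rows (n-1)-(j-i) .. n-1
   and columns i .. j (paper: rows n-j+i .. n, columns i .. j). The default
   ordinal i is never used since all indices are in range. *)
Definition bottom_block (R : Type) (n : nat) (X : 'M[R]_n) (i j : 'I_n)
    : 'M[R]_((j - i)%N.+1) :=
  \matrix_(u, v) X (insubd i (n.-1 - (j - i) + u)%N) (insubd i (i + v)%N).

(* Row u (paper row m+1, m = u) then holds a_{n-j+i+m, j-m} in column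
   j-i+1-m (paper), as required. *)
Definition antidiag_block (K : fieldType) (n : nat) (i j : 'I_n)
    : 'M[ratfun K n]_((j - i)%N.+1) :=
  \matrix_(u, v) if (u + v == j - i)%N then bottom_block (indetmx K n) i j u v
                 else 0.

From HB Require Import structures.
From mathcomp Require Import all_boot all_order all_algebra.
From mathcomp Require Import fraction.
From mathcomp Require Import mpoly.
From mathcomp Require Import zify.

Set Implicit Arguments.
Unset Strict Implicit.
Unset Printing Implicit Defensive.
Import GRing.Theory.
Local Open Scope ring_scope.

(* When k + l >= n - 1
   there is exactly one bottom square block with top-right corner (k, l), and
   all its other entries sit at admissible positions of (k, l). Expanding its
   determinant along the top row makes it affine in the corner entry, with
   slope the cofactor; this cofactor is, up to sign, the determinant of the
   next smaller bottom block, hence inductively that of an anti-diagonal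
   block of indeterminates, which is nonzero. So condition 3 for that block
   determines B_{k,l} as a_{k,l} minus a rational function of entries at
   admissible positions, and B is the unique fixed point of a map that is
   triangular for the height n - k + l, which decreases strictly along
   admissible positions. *)

Section TriangularFixpoint.
Variables (T V : Type) (h : T -> nat) (F : T -> (T -> V) -> V).
Hypothesis F_local :
  forall p f g, (forall q, (h q < h p)%N -> f q = g q) -> F p f = F p g.

Let step (f : T -> V) : T -> V := fun p => F p f.

Lemma iter_step_stable m f p : (h p < m)%N -> iter m.+1 step f p = iter m step f p.
Proof.
elim: m p => // m IH p hp; apply: F_local => q hq; apply: IH; lia.
Qed.

Lemma triangular_fixpoint_exists m f :
  (forall p, h p < m)%N -> forall p, iter m step f p = F p (iter m step f).
Proof. by move=> hm p; rewrite -iter_step_stable. Qed.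

Lemma triangular_fixpoint_unique f g :
  (forall p, f p = F p f) -> (forall p, g p = F p g) -> f =1 g.
Proof.
move=> fF gF; suff fg m p : (h p < m)%N -> f p = g p by move=> p; apply: (fg (h p).+1).
elim: m p => // m IH p hp; rewrite fF gF; apply: F_local => q hq; apply: IH; lia.
Qed.

End TriangularFixpoint.

Section Determinants.
Variable R : comNzRingType.

Lemma expand_det_entry m (A : 'M[R]_m) i j :
  \det A = A i j * cofactor A i j + \det (A - A i j *: delta_mx i j).
Proof.
set B := A - _; have cofB v : cofactor B i v = cofactor A i v.
  congr (_ * \det _); apply/matrixP => u w; rewrite !mxE.
  by rewrite eq_sym (negbTE (neq_lift i u)) mulr0 subr0.
rewrite !(expand_det_row _ i) (bigD1 j) //= [in RHS](bigD1 j) //= addrA.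
congr (_ + _).
  by rewrite cofB !mxE !eqxx mulr1 subrr mul0r addr0.
by apply: eq_bigr => v vj; rewrite cofB !mxE (negbTE vj) andbF mulr0 subr0.
Qed.

Lemma cofactor_mx1 (A : 'M[R]_1) i j : cofactor A i j = 1.
Proof. by rewrite !ord1 /cofactor det_mx00 mulr1 expr0. Qed.

Definition antidiag_part d (A : 'M[R]_d.+1) : 'M[R]_d.+1 :=
  \matrix_(u, v) if (u + v == d)%N then A u v else 0.

Lemma row'_col'_antidiag_part d (A : 'M[R]_d.+2) :
  row' 0 (col' ord_max (antidiag_part A)) = antidiag_part (row' 0 (col' ord_max A)).
Proof.
by apply/matrixP => u v; rewrite !mxE lift0 (lift_max v) addSn eqSS.
Qed.

Lemma det_antidiag_part d (A : 'M[R]_d.+1) :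
  \det (antidiag_part A) = A 0 ord_max * cofactor (antidiag_part A) 0 ord_max.
Proof.
rewrite (expand_det_entry _ 0 ord_max) mxE eqxx (expand_det_row _ 0) big1 ?addr0 // => v _.
rewrite !mxE add0n; have [-> | vmax] := eqVneq v ord_max.
  by rewrite !eqxx mulr1 subrr mul0r.
by rewrite -val_eqE in vmax; rewrite (negbTE vmax) andbF mulr0 subr0 mul0r.
Qed.

End Determinants.

Lemma det_antidiag_part_neq0 (R : idomainType) d (A : 'M[R]_d.+1) :
  (forall u v : 'I_d.+1, (u + v == d)%N -> A u v != 0) -> \det (antidiag_part A) != 0.
Proof.
elim: d A => [|d IH] A A_neq0.
  by rewrite det_antidiag_part cofactor_mx1 mulr1 A_neq0.
rewrite det_antidiag_part mulf_neq0 ?A_neq0 //.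
rewrite /cofactor row'_col'_antidiag_part mulf_neq0 ?signr_eq0 // IH // => u v uv.
by rewrite !mxE A_neq0 //= /bump leq0n [(d.+1 <= v)%N]leqNgt ltn_ord add1n addSn eqSS.
Qed.

Section BottomSquares.
Variables (R : Type) (n : nat).
Implicit Types (X : 'M[R]_n).

Lemma val_insubd_ord (x0 : 'I_n) e : (e < n)%N -> insubd x0 e = e :> nat.
Proof. by move=> en; rewrite insubdK. Qed.

(* [x0] is only the default value of [insubd]: it does not matter as long as
   [c + d < n] (bottom_square_default). *)
Definition bottom_square X (x0 : 'I_n) (c d : nat) : 'M[R]_d.+1 :=
  \matrix_(u, v) X (insubd x0 (n.-1 - d + u)%N) (insubd x0 (c + v)%N).

Lemma bottom_square_default X (x0 x1 : 'I_n) c d :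
  (c + d < n)%N -> bottom_square X x0 c d = bottom_square X x1 c d.
Proof.
move=> cd; apply/matrixP => u v; have := ltn_ord u; have := ltn_ord v.
by move=> vd ud; rewrite !mxE; congr (X _ _); apply/val_inj; rewrite /= !val_insubd_ord //; lia.
Qed.

Lemma row'_col'_bottom_square X (x0 : 'I_n) c d :
  (c + d.+1 < n)%N ->
  row' 0 (col' ord_max (bottom_square X x0 c d.+1)) = bottom_square X x0 c d.
Proof.
move=> cd; apply/matrixP => u v; rewrite !mxE lift0 lift_max /=.
by congr (X (insubd _ _) _); lia.
Qed.

End BottomSquares.

Section CornerCorrection.
Variable R : fieldType.

Definition corner_correction d (C : 'M[R]_d.+1) : R :=
  \det (C - C 0 ord_max *: delta_mx 0 ord_max) / cofactor C 0 ord_max.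

Lemma corner_correction_local d (C C' : 'M[R]_d.+1) :
  (forall u v, (u, v) != (0, ord_max) -> C u v = C' u v) ->
  corner_correction C = corner_correction C'.
Proof.
move=> CC'; rewrite /corner_correction; congr (\det _ / _).
  apply/matrixP => u v; rewrite !mxE.
  have [[-> ->] | uv] := eqVneq (u, v) (0, ord_max); first by rewrite !eqxx !mulr1 !subrr.
  by rewrite -xpair_eqE (negbTE uv) !mulr0 !subr0 CC'.
by congr (_ * \det _); apply/matrixP => u v; rewrite !mxE CC'.
Qed.

Lemma det_corner_correction d (C : 'M[R]_d.+1) : cofactor C 0 ord_max != 0 ->
  \det C = (C 0 ord_max + corner_correction C) * cofactor C 0 ord_max.
Proof.
by move=> cof0; rewrite (expand_det_entry _ 0 ord_max) mulrDl divfK.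
Qed.

End CornerCorrection.

Section RationalFunctionsInVars.
Variables (K : fieldType) (n : nat).
Local Notation P := {mpoly K[n * n]}.
Local Notation F := (ratfun K n).
Implicit Types (S T : {set 'I_n * 'I_n}) (p q : P) (x y : F).

Lemma mxvec_index_inj (k l k' l' : 'I_n) :
  mxvec_index k l = mxvec_index k' l' -> (k, l) = (k', l').
Proof. by rewrite /mxvec_index => /cast_ord_inj /enum_rank_inj. Qed.

Lemma poly_in_vars_subset S T p :
  S \subset T -> poly_in_vars S p -> poly_in_vars T p.
Proof. by move=> /subsetP ST Sp m mp k l nz; apply/ST/(Sp m mp k l nz). Qed.

Lemma poly_in_vars0 S : poly_in_vars S (0 : P).
Proof. by move=> m; rewrite msupp0. Qed.

Lemma poly_in_vars1 S : poly_in_vars S (1 : P).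
Proof. by move=> m; rewrite msupp1 inE => /eqP -> k l; rewrite mnm0E. Qed.

Lemma poly_in_varsD S p q :
  poly_in_vars S p -> poly_in_vars S q -> poly_in_vars S (p + q).
Proof.
by move=> Sp Sq m /msuppD_le; rewrite mem_cat => /orP [/Sp | /Sq].
Qed.

Lemma poly_in_varsN S p : poly_in_vars S p -> poly_in_vars S (- p).
Proof. by move=> Sp m; rewrite (perm_mem (msuppN p)); apply: Sp. Qed.

Lemma poly_in_varsM S p q :
  poly_in_vars S p -> poly_in_vars S q -> poly_in_vars S (p * q).
Proof.
move=> Sp Sq m /msuppM_le /allpairsP [[m1 m2] /= [m1p m2q ->]] k l.
by rewrite mnmDE; case: (m1 _) (Sp m1 m1p k l) => [_ | ? -> //]; apply: Sq.
Qed.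

Lemma poly_in_vars_mpolyX S (k l : 'I_n) :
  (k, l) \in S -> poly_in_vars S ('X_(mxvec_index k l) : P).
Proof.
move=> klS m; rewrite msuppX inE => /eqP -> k' l'; rewrite mnm1E.
by case: (mxvec_index k l =P mxvec_index k' l') => // /mxvec_index_inj [<- <-].
Qed.

Lemma polyfracE p : polyfrac p = tofrac p.
Proof. by []. Qed.

Lemma ratfun_in_vars_subset S T x :
  S \subset T -> ratfun_in_vars S x -> ratfun_in_vars T x.
Proof.
move=> ST [p [q [q0 Sp Sq ->]]].
by exists p, q; split=> //; apply: poly_in_vars_subset ST _.
Qed.

Lemma ratfun_in_vars_poly S p : poly_in_vars S p -> ratfun_in_vars S (polyfrac p).
Proof.
move=> Sp; exists p, 1; split=> //; first exact: oner_neq0.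
  exact: poly_in_vars1.
by rewrite !polyfracE tofrac1 divr1.
Qed.

Lemma ratfun_in_vars0 S : ratfun_in_vars S (0 : F).
Proof. by rewrite -(tofrac0 P); apply/ratfun_in_vars_poly/poly_in_vars0. Qed.

Lemma ratfun_in_vars1 S : ratfun_in_vars S (1 : F).
Proof. by rewrite -(tofrac1 P); apply/ratfun_in_vars_poly/poly_in_vars1. Qed.

Lemma ratfun_in_vars_indet S (k l : 'I_n) :
  (k, l) \in S -> ratfun_in_vars S (indet K k l).
Proof. by move=> klS; apply/ratfun_in_vars_poly/poly_in_vars_mpolyX. Qed.

Lemma ratfun_in_varsD S x y :
  ratfun_in_vars S x -> ratfun_in_vars S y -> ratfun_in_vars S (x + y).
Proof.
move=> [p1 [q1 [q1_0 Sp1 Sq1 ->]]] [p2 [q2 [q2_0 Sp2 Sq2 ->]]].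
exists (p1 * q2 + p2 * q1), (q1 * q2); split.
- by rewrite mulf_neq0.
- by apply: poly_in_varsD; apply: poly_in_varsM.
- exact: poly_in_varsM.
by rewrite !polyfracE tofracD !tofracM addf_div // tofrac_eq0.
Qed.

Lemma ratfun_in_varsN S x : ratfun_in_vars S x -> ratfun_in_vars S (- x).
Proof.
move=> [p [q [q0 Sp Sq ->]]]; exists (- p), q; split=> //.
  exact: poly_in_varsN.
by rewrite !polyfracE tofracN mulNr.
Qed.

Lemma ratfun_in_varsM S x y :
  ratfun_in_vars S x -> ratfun_in_vars S y -> ratfun_in_vars S (x * y).
Proof.
move=> [p1 [q1 [q1_0 Sp1 Sq1 ->]]] [p2 [q2 [q2_0 Sp2 Sq2 ->]]].
exists (p1 * p2), (q1 * q2); split; rewrite ?mulf_neq0 //; try exact: poly_in_varsM.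
by rewrite !polyfracE !tofracM mulf_div.
Qed.

Lemma ratfun_in_varsV S x : ratfun_in_vars S x -> ratfun_in_vars S x^-1.
Proof.
move=> [p [q [q0 Sp Sq ->]]].
have [-> | p0] := eqVneq p 0.
  by rewrite !polyfracE tofrac0 mul0r invr0; apply: ratfun_in_vars0.
by exists q, p; split=> //; rewrite invf_div.
Qed.

Lemma ratfun_in_varsX S x m : ratfun_in_vars S x -> ratfun_in_vars S (x ^+ m).
Proof.
move=> Sx; elim: m => [|m IH]; first exact: ratfun_in_vars1.
by rewrite exprS; apply: ratfun_in_varsM.
Qed.

Lemma ratfun_in_vars_det S m (A : 'M[F]_m) :
  (forall u v, ratfun_in_vars S (A u v)) -> ratfun_in_vars S (\det A).
Proof.
move=> SA; apply: (big_ind (ratfun_in_vars S)) => [|x y|s _].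
- exact: ratfun_in_vars0.
- exact: ratfun_in_varsD.
apply: ratfun_in_varsM; first exact/ratfun_in_varsX/ratfun_in_varsN/ratfun_in_vars1.
by apply: (big_ind (ratfun_in_vars S)) => //; [apply: ratfun_in_vars1 | apply: ratfun_in_varsM].
Qed.

Lemma ratfun_in_vars_corner_correction S d (C : 'M[F]_d.+1) :
  (forall u v, (u, v) != (0, ord_max) -> ratfun_in_vars S (C u v)) ->
  ratfun_in_vars S (corner_correction C).
Proof.
move=> SC; apply: ratfun_in_varsM; last apply/ratfun_in_varsV/ratfun_in_varsM.
- apply: ratfun_in_vars_det => u v; rewrite !mxE.
  have [[-> ->] | uv] := eqVneq (u, v) (0, ord_max).
    by rewrite !eqxx mulr1 subrr; apply: ratfun_in_vars0.
  by rewrite -xpair_eqE (negbTE uv) mulr0 subr0; apply: SC.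
- exact/ratfun_in_varsX/ratfun_in_varsN/ratfun_in_vars1.
by apply: ratfun_in_vars_det => u v; rewrite !mxE; apply: SC.
Qed.

End RationalFunctionsInVars.

Section Construction.
Variables (K : fieldType) (n : nat).
Local Notation F := (ratfun K n).
Local Notation a := (indet K).
Local Notation A := (indetmx K n).
Implicit Types (X Y : 'M[F]_n) (k l : 'I_n).

Lemma indet_neq0 k l : a k l != 0.
Proof. by rewrite /indet /polyfrac tofrac_eq0 -msupp_eq0 msuppX. Qed.

Definition det_matches X (x0 : 'I_n) (c d : nat) : Prop :=
  \det (bottom_square X x0 c d) = \det (antidiag_part (bottom_square A x0 c d)).

Lemma det_matches_default X (x0 x1 : 'I_n) c d : (c + d < n)%N ->
  det_matches X x0 c d -> det_matches X x1 c d.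
Proof.
by move=> cd; rewrite /det_matches (bottom_square_default X x0 x1 cd)
  (bottom_square_default A x0 x1 cd).
Qed.

Lemma det_matchesE X (x0 : 'I_n) c d : (c + d < n)%N ->
  (forall d', d = d'.+1 -> det_matches X x0 c d') ->
  det_matches X x0 c d <->
  bottom_square X x0 c d 0 ord_max =
    bottom_square A x0 c d 0 ord_max - corner_correction (bottom_square X x0 c d).
Proof.
move=> cd smaller; set C := bottom_square X x0 c d.
set T := antidiag_part (bottom_square A x0 c d).
have detT : \det T = bottom_square A x0 c d 0 ord_max * cofactor T 0 ord_max.
  by rewrite det_antidiag_part [X in X * _]mxE /=.
(* The corner minors are the next smaller bottom squares. *)
have cofCT : cofactor C 0 ord_max = cofactor T 0 ord_max.
  case: d smaller @C @T detT cd => [|d] smaller C T detT cd; first by rewrite !cofactor_mx1.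
  by rewrite /cofactor row'_col'_antidiag_part !row'_col'_bottom_square ?smaller //; lia.
have cofT0 : cofactor T 0 ord_max != 0.
  have : \det T != 0 by apply: det_antidiag_part_neq0 => u v _; rewrite !mxE indet_neq0.
  by rewrite detT mulf_eq0 negb_or => /andP [].
rewrite /det_matches -/C -/T det_corner_correction cofCT // detT.
by split=> [/(mulIf cofT0) <- | ->]; rewrite ?addrK ?subrK.
Qed.

(* Only meaningful when [k + l + 2 > n]: otherwise the truncated subtraction
   [l - (n.-1 - k)] is junk, and [corner_value] does not look at it. *)
Definition corner_square X k l : 'M[F]_((n.-1 - k).+1) :=
  bottom_square X k (l - (n.-1 - k)) (n.-1 - k).

Definition corner_value X k l : F :=
  if (k + l + 2 <= n)%N then a k l
  else a k l - corner_correction (corner_square X k l).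

Lemma det_matches_corner_value X (x0 : 'I_n) c d : (c + d < n)%N ->
  (forall d', d = d'.+1 -> det_matches X x0 c d') ->
  det_matches X x0 c d <->
  X (insubd x0 (n.-1 - d)%N) (insubd x0 (c + d)%N) =
    corner_value X (insubd x0 (n.-1 - d)%N) (insubd x0 (c + d)%N).
Proof.
move=> cd smaller; rewrite det_matchesE // !mxE /= addn0.
set k := insubd x0 _; set l := insubd x0 _.
have kE : k = (n.-1 - d)%N :> nat by rewrite val_insubd_ord //; lia.
have lE : l = (c + d)%N :> nat by rewrite val_insubd_ord.
rewrite /corner_value ifN; last by lia.
rewrite /corner_square.
have -> : (n.-1 - k = d)%N by lia.
have -> : (l - d = c)%N by lia.
by rewrite (bottom_square_default X k x0 cd).
Qed.

Definition height (p : 'I_n * 'I_n) : nat := (n - p.1 + p.2)%N.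

Lemma height_admissible k l p : p \in admissible k l -> (height p < height (k, l))%N.
Proof.
case: p => k' l'; rewrite inE xpair_eqE -!val_eqE /height /= => /and3P [kk' l'l kl].
have := ltn_ord k'; lia.
Qed.

Lemma admissible_trans k l p :
  p \in admissible k l -> admissible p.1 p.2 \subset admissible k l.
Proof.
case: p => k' l' /=; rewrite inE xpair_eqE -!val_eqE /= => /and3P [kk' l'l kl].
apply/subsetP => -[k'' l'']; rewrite !inE !xpair_eqE -!val_eqE /=.
by move=> /and3P [k'k'' l''l' _]; apply/and3P; split; lia.
Qed.

Lemma corner_square_admissible k l (u v : 'I_(n.-1 - k).+1) :
  ~~ (k + l + 2 <= n)%N -> (u, v) != (0, ord_max) ->
  (insubd k (n.-1 - (n.-1 - k) + u)%N, insubd k (l - (n.-1 - k) + v)%N)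
    \in admissible k l.
Proof.
have := ltn_ord u; have := ltn_ord v; have := ltn_ord l.
rewrite inE !xpair_eqE -!val_eqE /= => *; rewrite !val_insubd_ord; lia.
Qed.

Lemma corner_value_local X Y k l :
  (forall q, (height q < height (k, l))%N -> X q.1 q.2 = Y q.1 q.2) ->
  corner_value X k l = corner_value Y k l.
Proof.
rewrite /corner_value => XY; have [// | kl] := boolP (k + l + 2 <= n)%N.
rewrite (@corner_correction_local _ _ _ (corner_square Y k l)) // => u v uv.
by rewrite !mxE; apply/(XY (_, _))/height_admissible/corner_square_admissible.
Qed.

Definition corner_fixpoint X := forall k l, X k l = corner_value X k l.

Let corner_step p (f : 'I_n * 'I_n -> F) :=
  corner_value (\matrix_(k, l) f (k, l)) p.1 p.2.

Let corner_step_local p f g :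
  (forall q, (height q < height p)%N -> f q = g q) -> corner_step p f = corner_step p g.
Proof.
by case: p => k l fg; apply: corner_value_local => -[k' l'] lt; rewrite !mxE fg.
Qed.

Lemma corner_fixpoint_exists : exists X, corner_fixpoint X.
Proof.
have height_lt (p : 'I_n * 'I_n) : (height p < n + n)%N.
  by case: p => k l; rewrite /height /=; have := ltn_ord l; lia.
have := triangular_fixpoint_exists corner_step_local (fun _ => 0) height_lt.
set f := iter _ _ _ => f_fix; exists (\matrix_(k, l) f (k, l)) => k l.
by rewrite mxE f_fix.
Qed.

Lemma corner_fixpoint_unique X Y : corner_fixpoint X -> corner_fixpoint Y -> X = Y.
Proof.
have fixE Z : corner_fixpoint Z -> forall p, Z p.1 p.2 = corner_step p (fun q => Z q.1 q.2).
  by move=> Z_fix [k l]; rewrite Z_fix; apply: corner_value_local => q _; rewrite mxE.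
move=> /fixE X_fix /fixE Y_fix; apply/matrixP => k l.
exact: (triangular_fixpoint_unique corner_step_local X_fix Y_fix (k, l)).
Qed.

Lemma corner_fixpoint_in_vars X : corner_fixpoint X ->
  forall k l, ratfun_in_vars (admissible k l) (X k l - a k l).
Proof.
move=> X_fix k l; move: (ltnSn (height (k, l))); move: {2}_.+1 => m.
elim: m k l => // m IH k l hkl; rewrite X_fix /corner_value.
have [_ | kl] := boolP (k + l + 2 <= n)%N; first by rewrite subrr; apply: ratfun_in_vars0.
rewrite addrAC subrr add0r; apply/ratfun_in_varsN/ratfun_in_vars_corner_correction.
move=> u v uv; have q_adm := corner_square_admissible kl uv.
rewrite mxE; set k' := insubd k _ in q_adm *; set l' := insubd k _ in q_adm *.
rewrite -(subrK (a k' l') (X k' l')); apply: ratfun_in_varsD.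
  apply: ratfun_in_vars_subset (admissible_trans q_adm) (IH _ _ _).
  exact: leq_trans (height_admissible q_adm) hkl.
exact: ratfun_in_vars_indet.
Qed.

Lemma corner_fixpoint_det_matches X : corner_fixpoint X ->
  forall (x0 : 'I_n) c d, (c + d < n)%N -> det_matches X x0 c d.
Proof.
move=> X_fix x0 c d; elim: d x0 c => [|d IH] x0 c cd.
  by apply/det_matches_corner_value.
by apply/det_matches_corner_value => // _ [<-]; apply: IH; lia.
Qed.

Lemma corner_fixpoint_of_det_matches X :
  (forall k l, (k + l + 2 <= n)%N -> X k l = a k l) ->
  (forall (x0 : 'I_n) c d, (c + d < n)%N -> det_matches X x0 c d) ->
  corner_fixpoint X.
Proof.
move=> fixed dets k l; have [kl | kl] := boolP (k + l + 2 <= n)%N.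
  by rewrite /corner_value kl fixed.
have := ltn_ord l; have := ltn_ord k => k_lt l_lt.
have cd : (l - (n.-1 - k) + (n.-1 - k) < n)%N by lia.
have smaller d' : (n.-1 - k = d'.+1)%N -> det_matches X k (l - (n.-1 - k)) d'.
  by move=> dd'; apply: dets; lia.
have [+ _] := det_matches_corner_value cd smaller.
have -> : insubd k (n.-1 - (n.-1 - k))%N = k by apply/val_inj; rewrite /= val_insubd_ord; lia.
have -> : insubd k (l - (n.-1 - k) + (n.-1 - k))%N = l.
  by apply/val_inj; rewrite /= val_insubd_ord; lia.
by apply; apply: dets.
Qed.

Lemma bottom_block_dets_match X :
  (forall i j : 'I_n, (i <= j)%N ->
     \det (bottom_block X i j) = \det (antidiag_block K i j)) <->
  (forall (x0 : 'I_n) c d, (c + d < n)%N -> det_matches X x0 c d).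
Proof.
split=> [dets x0 c d cd | dets i j ij]; last by apply: dets; have := ltn_ord j; lia.
have c_lt : (c < n)%N by lia.
have : det_matches X (Ordinal c_lt) c (c + d - c) :=
  dets (Ordinal c_lt) (Ordinal cd) (leq_addr d c).
by rewrite addKn; apply: det_matches_default.
Qed.

End Construction.

Theorem lemma4p4 (K : fieldType) (n : nat) :
  exists! B : 'M[ratfun K n]_n,
    [/\ (forall i j : 'I_n, (i + j + 2 <= n)%N -> B i j = indet K i j),
        (forall i j : 'I_n,
           ratfun_in_vars (admissible i j) (B i j - indet K i j))
      & (forall i j : 'I_n, (i <= j)%N ->
           \det (bottom_block B i j) = \det (antidiag_block K i j))].
Proof.
have [B B_fix] := corner_fixpoint_exists K n.
exists B; split.
  split=> [i j ij | | ].
  - by rewrite B_fix /corner_value ij.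
  - exact: corner_fixpoint_in_vars.
  - exact/bottom_block_dets_match/corner_fixpoint_det_matches.
move=> B' [fixed _ dets]; apply: corner_fixpoint_unique B_fix _.
exact/corner_fixpoint_of_det_matches/bottom_block_dets_match.
Qed.
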